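(* Let $r,k\in\mathbb Z$ with $0\le k\le r$, and suppose Assumption (A1) holds. Then there is a constant $\kappa_{r,k}>0$, independent of $\tau_n$ and $n$, such that for all $\varphi\in P_r(I_n,\mathbb R^d)$ $$\int_{I_n}\|\varphi'(t)\|\,dt\le\tau_n\sup_{t\in I_n}\|\varphi'(t)\|\le\kappa_{r,k}\Big(\sum_{i=1}^{\lfloor (k-1)/2\rfloor}\big(\tfrac{\tau_n}{2}\big)^i\|\varphi^{(i)}(t_{n-1}^+)\|+\sum_{i=1}^{\lfloor k/2\rfloor}\big(\tfrac{\tau_n}{2}\big)^i\|\varphi^{(i)}(t_n^-)\|+\sum_{i=\delta_{0,k}}^{r-k}\Big\|\mathscr I_n\big[\varphi'(t)(1+T_n^{-1}(t))^i\big]\Big\|\Big)$$ and $$\sup_{t\in I_n}\|\varphi(t)\|\le\min\{\|\varphi(t_{n-1}^+)\|,\|\varphi(t_n^-)\|\}+\int_{I_n}\|\varphi'(t)\|\,dt.$$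
   Context: Mesh: $t_0<t_1<\dots<t_N$, $I_n=(t_{n-1},t_n]$, $\tau_n=t_n-t_{n-1}\le1$; $v(t_n^\pm)$ denote one-sided limits. $T_n(\hat t)=\frac{t_n+t_{n-1}}{2}+\frac{\tau_n}{2}\hat t$ maps $(-1,1]$ onto $I_n$. $\|\cdot\|$ is the Euclidean norm on $\mathbb R^d$; $P_s$ denotes polynomials of degree at most $s$; $\delta_{i,j}$ is the Kronecker symbol; empty sums are zero. $\widehat{\mathscr I}$ is a linear functional (reference integrator) on $C^{k_{\mathscr I}}([-1,1])$ and its local version is $\mathscr I_n[\varphi]=\frac{\tau_n}{2}\widehat{\mathscr I}[\varphi\circ T_n]$, acting componentwise on vector-valued functions. Assumption (A1): whenever $\hat\psi\in P_{r-\max\{1,k\}}([-1,1])$ satisfies $\widehat{\mathscr I}\big[(1-\hat t)^{\lfloor k/2\rfloor}(1+\hat t)^{|\lfloor (k-1)/2\rfloor|}\hat\psi\,\hat\varphi\big]=0$ for all $\hat\varphi\in P_{r-\max\{1,k\}}([-1,1])$, then $\hat\psi\equiv0$. *)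

From HB Require Import structures.
From mathcomp Require Import all_boot all_order all_algebra.
From mathcomp Require Import all_classical all_reals all_analysis.
Set Implicit Arguments. Unset Strict Implicit. Unset Printing Implicit Defensive.
Import Order.TTheory GRing.Theory Num.Theory.
Import numFieldNormedType.Exports.
Local Open Scope ring_scope.

Section Defs.
Variable R : realType.

(* floor (z / 2) for an integer z (intdiv's %/ by a positive divisor is floor) *)
Definition floor2 (z : int) : int := (z %/ 2)%Z.

(* nonnegative part of an integer, used as the upper bound of a sum
   \sum_{i=1}^{z}, which is empty when z < 1 *)
Definition posn (z : int) : nat := match z with Posz n => n | Negz _ => 0%N end.

(* p ∈ P_s  (s : int; P_s = {0} for s < 0) *)
Definition inP (s : int) (p : {poly R}) : bool := ((size p)%:Z <= s + 1)%R.

Definition enorm (d : nat) (v : 'I_d -> R) : R := Num.sqrt (\sum_(j < d) v j ^+ 2).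

(* T_n(that) = (a+b)/2 + (b-a)/2 * that, mapping (-1,1] onto (a,b] *)
Definition Tmap (a b : R) : {poly R} := ((a + b) / 2)%:P + ((b - a) / 2)%:P * 'X.
Definition Tinv (a b : R) : {poly R} := (2 / (b - a))%:P * ('X - ((a + b) / 2)%:P).

(* local integrator I_n[f] = tau_n/2 * Ihat[f o T_n] *)
Definition locI (Ihat : {poly R} -> R) (a b : R) (f : {poly R}) : R :=
  (b - a) / 2 * Ihat (f \Po Tmap a b).

Definition A1 (Ihat : {poly R} -> R) (r k : nat) : Prop :=
  let s : int := r%:Z - Num.max 1 k%:Z in
  let w : {poly R} := (1 - 'X) ^+ k./2 * (1 + 'X) ^+ `|floor2 (k%:Z - 1)| in
  forall psi : {poly R}, inP s psi ->
    (forall phi : {poly R}, inP s phi -> Ihat (w * psi * phi) = 0) -> psi = 0.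

Definition evalv (d : nat) (phi : 'I_d -> {poly R}) (t : R) : 'I_d -> R :=
  fun j => (phi j).[t].
Definition derivv (d : nat) (phi : 'I_d -> {poly R}) (i : nat) : 'I_d -> {poly R} :=
  fun j => (phi j)^`(i).

End Defs.

From HB Require Import structures.
From mathcomp Require Import all_boot all_order all_algebra.
From mathcomp Require Import all_classical all_reals all_analysis.
From mathcomp Require Import ring lra zify.
Import Order.TTheory GRing.Theory Num.Theory.
Import numFieldNormedType.Exports.
Local Open Scope classical_set_scope.
Local Open Scope ring_scope.
Set Implicit Arguments. Unset Strict Implicit. Unset Printing Implicit Defensive.

(* Let q := (phi o T_n)' be the derivative of phi pulled back to the reference
   interval; it has degree < r.  By the chain rule its endpoint derivatives
   q^(i-1)(-1), q^(i-1)(1) are (tau/2)^i phi^(i)(a), (tau/2)^i phi^(i)(b), and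
   Ihat[q (1 + x)^i] = I_n[phi' (1 + T_n^{-1})^i].  These functionals are
   unisolvent on polynomials of size <= r: a polynomial annihilated by them
   factors as (1 - x)^floor(k/2) (1 + x)^floor((k-1)/2) psi with psi orthogonal,
   for Ihat and the weight of (A1), to P_{r - max(1,k)}, so psi = 0 by (A1).
   Equivalence of norms in finite dimension then bounds |q| on [-1, 1] by a
   constant times the sum of the functionals, which rescales to the middle
   inequality.  The first inequality is "integral <= length * sup" and the
   last one is the fundamental theorem of calculus. *)

Section EuclideanNorm.
Variables (R : realType) (d : nat).
Implicit Types (u v : 'I_d -> R).

Lemma enorm_ge0 v : 0 <= enorm v.
Proof. exact: sqrtr_ge0. Qed.

Lemma enorm_sq v : enorm v ^+ 2 = \sum_(j < d) v j ^+ 2.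
Proof. by rewrite /enorm sqr_sqrtr // sumr_ge0 // => j _; apply: sqr_ge0. Qed.

Lemma eq_enorm u v : (forall j, u j = v j) -> enorm u = enorm v.
Proof. by move=> uv; rewrite /enorm; under eq_bigr do rewrite uv. Qed.

Lemma enormZ (c : R) v : enorm (fun j => c * v j) = `|c| * enorm v.
Proof.
rewrite /enorm; under eq_bigr do rewrite exprMn.
by rewrite -mulr_sumr sqrtrM ?sqr_ge0 // sqrtr_sqr.
Qed.

Lemma enorm0 : enorm (fun _ : 'I_d => 0 : R) = 0.
Proof. by rewrite /enorm big1 ?sqrtr0 // => j _; rewrite expr0n. Qed.

Lemma enorm_eq0 v : enorm v = 0 -> forall j, v j = 0.
Proof.
move=> v0 j; have sq0 : \sum_(j < d) v j ^+ 2 = 0 by rewrite -enorm_sq v0 expr0n.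
have /eqP := @psumr_eq0P _ _ _ _ (fun i _ => sqr_ge0 (v i)) sq0 j isT.
by rewrite sqrf_eq0 => /eqP.
Qed.

(* Cauchy-Schwarz, from the nonnegativity of sum_j (|v| u_j - |u| v_j)^2. *)
Lemma enorm_CS u v : \sum_(j < d) u j * v j <= enorm u * enorm v.
Proof.
set A := enorm u; set B := enorm v; set S := \sum_(j < d) u j * v j.
have [A0|Anz] := eqVneq A 0.
  by rewrite /S big1 ?A0 ?mul0r // => j _; rewrite (enorm_eq0 A0) mul0r.
have [B0|Bnz] := eqVneq B 0.
  by rewrite /S big1 ?B0 ?mulr0 // => j _; rewrite (enorm_eq0 B0) mulr0.
have A_gt0 : 0 < A by rewrite lt_def Anz enorm_ge0.
have B_gt0 : 0 < B by rewrite lt_def Bnz enorm_ge0.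
have sq_ge0 : 0 <= \sum_(j < d) (B * u j - A * v j) ^+ 2.
  by apply: sumr_ge0 => j _; apply: sqr_ge0.
have expand : \sum_(j < d) (B * u j - A * v j) ^+ 2 =
   B ^+ 2 * (\sum_(j < d) u j ^+ 2) + A ^+ 2 * (\sum_(j < d) v j ^+ 2) - 2 * A * B * S.
  by rewrite /S !mulr_sumr -big_split /= -sumrB; apply: eq_bigr => j _; ring.
rewrite expand -!enorm_sq -/A -/B in sq_ge0.
have : 0 <= A * B * (A * B - S) by nra.
by rewrite pmulr_rge0 ?mulr_gt0 // subr_ge0.
Qed.

Lemma enormD u v : enorm (fun j => u j + v j) <= enorm u + enorm v.
Proof.
rewrite -(ler_pXn2r (n := 2)) ?nnegrE ?addr_ge0 ?enorm_ge0 //.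
rewrite enorm_sq; under eq_bigr do rewrite sqrrD.
rewrite !big_split /= -!enorm_sq sqrrD mulr2n lerD2r lerD2l.
by apply: lerD; apply: enorm_CS.
Qed.

Lemma enorm_sum (I : Type) (s : seq I) (F : I -> 'I_d -> R) :
  enorm (fun j => \sum_(l <- s) F l j) <= \sum_(l <- s) enorm (F l).
Proof.
elim: s => [|x s IH].
  by rewrite big_nil (eq_enorm (v := fun _ => 0)) ?enorm0 // => j; rewrite big_nil.
rewrite big_cons (eq_enorm (v := fun j => F x j + \sum_(l <- s) F l j)); last first.
  by move=> j; rewrite big_cons.
by apply: le_trans (enormD _ _) _; rewrite lerD2l.
Qed.

End EuclideanNorm.

Section NormEquivalence.
Variable R : realType.

Definition linfun (L : {poly R} -> R) : Prop :=
  forall (c : R) (p q : {poly R}), L (c *: p + q) = c * L p + L q.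

Lemma linfun0 L : linfun L -> L 0 = 0.
Proof. by move=> linL; have := linL 1 0 0; rewrite scaler0 addr0 mul1r; lra. Qed.

Lemma linfunZ L c p : linfun L -> L (c *: p) = c * L p.
Proof. by move=> linL; rewrite -[c *: p]addr0 linL linfun0 // addr0. Qed.

Lemma linfun_sum L (I : Type) (s : seq I) (F : I -> {poly R}) :
  linfun L -> L (\sum_(i <- s) F i) = \sum_(i <- s) L (F i).
Proof.
move=> linL; apply: (big_ind2 (fun p x => L p = x)) => //; first exact: linfun0 linL.
by move=> p1 x1 p2 x2 <- <-; rewrite -[p1]scale1r linL mul1r scale1r.
Qed.

(* If finitely many linear functionals vanish simultaneously only at the zero
   polynomial of size <= n, then the coefficients of such polynomials are fixed
   linear combinations of the values of the functionals (a left inverse of the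
   injective matrix of the functionals on the monomial basis). *)
Lemma coef_reconstruction n m (L : 'I_m -> {poly R} -> R) :
  (forall l, linfun (L l)) ->
  (forall p : {poly R}, (size p <= n)%N -> (forall l, L l p = 0) -> p = 0) ->
  exists B : 'M[R]_(m, n), forall p : {poly R}, (size p <= n)%N ->
    forall i : 'I_n, p`_i = \sum_(l < m) L l p * B l i.
Proof.
move=> linL injL.
pose M : 'M[R]_(n, m) := \matrix_(i, l) L l 'X^i.
have rowM (c : 'rV[R]_n) l : (c *m M) 0 l = L l (rVpoly c).
  rewrite mxE [in RHS](row_sum_delta c) linear_sum linfun_sum //.
  by apply: eq_bigr => i _; rewrite linearZ /= linfunZ // rVpoly_delta mxE.
have freeM : row_free M.
  rewrite -kermx_eq0; apply/eqP/row_matrixP => i; rewrite row0.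
  set c := row i (kermx M).
  have cM0 : c *m M = 0 by apply/sub_kermxP; exact: row_sub.
  have p0 : rVpoly c = 0 by apply: injL => [|l]; rewrite ?size_poly // -rowM cM0 mxE.
  by rewrite -[c]rVpolyK p0 linear0.
have [B MB1] := row_freeP freeM; exists B => p sp i.
pose c : 'rV[R]_n := poly_rV p.
have cMB : c = c *m M *m B by rewrite -mulmxA MB1 mulmx1.
have := congr1 (fun A : 'rV_n => A 0 i) cMB; rewrite /= [in X in X = _]mxE => ->.
by rewrite mxE; apply: eq_bigr => l _; rewrite rowM poly_rV_K.
Qed.

Lemma norm_equivalence n (I : eqType) (s : seq I) (L : I -> {poly R} -> R) :
  (forall i, i \in s -> linfun (L i)) ->
  (forall p : {poly R}, (size p <= n)%N -> (forall i, i \in s -> L i p = 0) -> p = 0) ->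
  exists C : R, 0 <= C /\
    forall d (q : 'I_d -> {poly R}), (forall j, size (q j) <= n)%N ->
    forall x : R, `|x| <= 1 ->
      enorm (evalv q x) <= C * \sum_(i <- s) enorm (fun j => L i (q j)).
Proof.
move=> linL injL; set m := size s.
pose Lt (l : 'I_m) := L (tnth (in_tuple s) l).
have [B coefB] : exists B : 'M[R]_(m, n), forall p : {poly R}, (size p <= n)%N ->
    forall i : 'I_n, p`_i = \sum_(l < m) Lt l p * B l i.
  apply: coef_reconstruction => [l|p sp Lp0]; first by apply: linL; exact: mem_tnth.
  apply: injL => // i si.
  by have /tnthP [l ->] : i \in in_tuple s by []; exact: Lp0.
pose C := \sum_(l < m) \sum_(i < n) `|B l i|.
exists C; split; first by do 2!apply: sumr_ge0 => ? _.
move=> d q sq x x1.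
pose g (l : 'I_m) := \sum_(i < n) B l i * x ^+ i.
have evalq j : evalv q x j = \sum_(l <- enum 'I_m) g l * Lt l (q j).
  rewrite /evalv (horner_coef_wide _ (sq j)) big_enum /=.
  under eq_bigr do rewrite coefB // mulr_suml.
  rewrite exchange_big /=; apply: eq_bigr => l _.
  by rewrite /g mulr_suml; apply: eq_bigr => i _; ring.
have gC l : `|g l| <= C.
  apply: le_trans (ler_norm_sum _ _ _) _.
  apply: (@le_trans _ _ (\sum_(i < n) `|B l i|)).
    apply: ler_sum => i _; rewrite normrM normrX ler_piMr //.
    exact: exprn_ile1.
  rewrite /C (bigD1 l) //= lerDl; by do 2!apply: sumr_ge0 => ? _.
rewrite (eq_enorm evalq) big_tnth mulr_sumr.
apply: le_trans (enorm_sum _ _) _; rewrite big_enum /=.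
by apply: ler_sum => l _; rewrite enormZ ler_wpM2r ?enorm_ge0.
Qed.

End NormEquivalence.

Section RootsAndMoments.
Variable R : realType.

Lemma derivn_mulXsubC (q : {poly R}) (c : R) i :
  (q * ('X - c%:P))^`(i.+1) = q^`(i) *+ i.+1 + q^`(i.+1) * ('X - c%:P).
Proof.
elim: i => [|i IH].
  by rewrite derivn1 derivM derivXsubC mulr1 derivn0 addrC derivn1.
rewrite derivnS IH derivD derivMn derivM derivXsubC mulr1 -!derivnS.
by rewrite [in RHS]mulrSr -!addrA [_ * _ + _]addrC.
Qed.

Lemma derivs_vanish_factor m (c : R) (p : {poly R}) :
  (forall i, (i < m)%N -> p^`(i).[c] = 0) -> exists s, p = s * ('X - c%:P) ^+ m.
Proof.
elim: m p => [|m IH] p pc0; first by exists p; rewrite expr0 mulr1.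
have /factor_theorem [q pq] : root p c by rewrite /root -[p]derivn0 pc0.
have qc0 i : (i < m)%N -> q^`(i).[c] = 0.
  move=> im; have := pc0 i.+1 im; rewrite pq derivn_mulXsubC hornerD hornerM.
  rewrite hornerXsubC subrr mulr0 addr0 hornerMn -mulr_natr => /eqP.
  by rewrite mulf_eq0 pnatr_eq0 orbF => /eqP.
have [s qs] := IH q qc0; exists s; by rewrite pq qs exprSr mulrA.
Qed.

Lemma XsubN1 : 'X - (-1)%:P = 1 + 'X :> {poly R}.
Proof. by rewrite polyCN opprK addrC. Qed.

Lemma endpoint_factor m1 m2 (q : {poly R}) :
  (forall i, (i < m1)%N -> q^`(i).[-1] = 0) ->
  (forall i, (i < m2)%N -> q^`(i).[1] = 0) ->
  exists psi : {poly R}, q = (1 - 'X) ^+ m2 * (1 + 'X) ^+ m1 * psi.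
Proof.
move=> left0 right0.
have [s1 qs1] := derivs_vanish_factor left0.
have [s2 qs2] := derivs_vanish_factor right0.
have co : coprimep (('X - 1%:P) ^+ m2 : {poly R}) (('X - (-1)%:P) ^+ m1).
  apply: coprimep_expl; apply: coprimep_expr; apply: coprimep_XsubC2.
  by rewrite -opprD oppr_eq0 -(natrD R 1 1) pnatr_eq0.
have : ('X - 1%:P) ^+ m2 %| s1 by rewrite -(Gauss_dvdpl _ co) -qs1 qs2 dvdp_mulIr.
case/dvdpP => psi1 s1psi1.
exists ((-1) ^+ m2 *: psi1).
have -> : (1 - 'X) ^+ m2 = (-1) ^+ m2 *: ('X - 1%:P) ^+ m2 :> {poly R}.
  by rewrite -exprZn scaleN1r opprB polyC1.
rewrite qs1 s1psi1 -XsubN1 -!scalerAl -scalerAr scalerA -expr2 sqrr_sign scale1r.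
by rewrite [RHS]mulrC mulrA.
Qed.

Lemma size_weight m1 m2 :
  size ((1 - 'X) ^+ m2 * (1 + 'X) ^+ m1 : {poly R}) = (m1 + m2).+1.
Proof.
rewrite (_ : 1 - 'X = (-1) *: ('X - 1%:P)); last by rewrite scaleN1r opprB polyC1.
rewrite -XsubN1 exprZn -scalerAl size_scale ?signr_eq0 // size_mul.
- by rewrite !size_exp_XsubC; lia.
- by rewrite -size_poly_eq0 size_exp_XsubC.
- by rewrite -size_poly_eq0 size_exp_XsubC.
Qed.

(* If a linear functional annihilates q (1 + x)^i for e <= i < e + N, it
   annihilates q (1 + x)^e phi for every phi of size <= N, since the powers
   (1 + x)^i, i < N, span the polynomials of size <= N. *)
Lemma moments_vanish (L : {poly R} -> R) (q : {poly R}) e N :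
  linfun L -> (forall i, (e <= i < e + N)%N -> L (q * (1 + 'X) ^+ i) = 0) ->
  forall phi : {poly R}, (size phi <= N)%N -> L (q * (1 + 'X) ^+ e * phi) = 0.
Proof.
move=> linL mom0 phi sphi.
set phi' := phi \Po ('X + (-1)%:P).
have sphi' : (size phi' <= N)%N by rewrite size_comp_poly2 // size_XaddC.
have -> : phi = \sum_(i < size phi') phi'`_i *: (1 + 'X) ^+ i.
  by rewrite -XsubN1 -comp_polyE comp_polyXaddC_K.
rewrite mulr_sumr linfun_sum //; apply: big1 => i _.
rewrite -scalerAr linfunZ // -mulrA -exprD mom0 ?mulr0 //.
by rewrite leq_addr ltn_add2l (leq_trans (ltn_ord i)).
Qed.

End RootsAndMoments.

Section Unisolvence.
Variables (R : realType) (Ihat : {poly R} -> R) (r k : nat).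
Hypothesis Ihat_lin : linfun Ihat.
Hypothesis k_le_r : (k <= r)%N.
Hypothesis hA1 : A1 Ihat r k.

(* Number of derivative conditions at the left endpoint, floor((k-1)/2)^+,
   at the right endpoint, floor(k/2), and first moment index delta_{0,k}. *)
Definition nleft : nat := posn (floor2 (k%:Z - 1)).
Definition nright : nat := k./2.
Definition mom0 : nat := (k == 0%N).

Lemma nleft_nright : (nleft + nright + 1 = k + mom0)%N.
Proof.
rewrite /nleft /nright /mom0; case: k => [//|k'].
rewrite -addn1 PoszD addrK /floor2 divz_nat /= -divn2 addn1 /=; lia.
Qed.

Lemma abs_floor2 : `|floor2 (k%:Z - 1)|%N = (nleft + mom0)%N.
Proof.
rewrite /nleft /mom0; case: k => [//|k'].
by rewrite -addn1 PoszD addrK /floor2 divz_nat /=; lia.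
Qed.

Lemma max1k : Num.max 1 k%:Z = (k + mom0)%N%:Z.
Proof. by rewrite /mom0; case: k => [//|k'] /=; rewrite addn0 max_r // lez_nat. Qed.

Definition dof (x : nat + nat + nat) : {poly R} -> R :=
  match x with
  | inl (inl i) => fun q => q^`(i.-1).[-1]
  | inl (inr i) => fun q => q^`(i.-1).[1]
  | inr i => fun q => Ihat (q * (1 + 'X) ^+ i)
  end.

Definition dofs : seq (nat + nat + nat) :=
  [seq inl (inl i) | i <- index_iota 1 nleft.+1] ++
  [seq inl (inr i) | i <- index_iota 1 nright.+1] ++
  [seq inr i | i <- index_iota mom0 (r - k).+1].

Lemma dof_lin x : linfun (dof x).
Proof.
case: x => [[i|i]|i] c p q /=; rewrite ?(derivnD, derivnZ, hornerD, hornerZ) //.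
by rewrite mulrDl -scalerAl Ihat_lin.
Qed.

(* Vanishing endpoint derivatives factor out the weight of (A1), and the
   vanishing moments make the cofactor Ihat-orthogonal to P_{r - max(1,k)}. *)
Lemma dofs_unisolvent (q : {poly R}) :
  (size q <= r)%N -> (forall x, x \in dofs -> dof x q = 0) -> q = 0.
Proof.
move=> sq dofs0.
have left0 i : (i < nleft)%N -> q^`(i).[-1] = 0.
  by move=> il; apply: (dofs0 (inl (inl i.+1))); rewrite !mem_cat map_f ?mem_index_iota.
have right0 i : (i < nright)%N -> q^`(i).[1] = 0.
  move=> ir; apply: (dofs0 (inl (inr i.+1))).
  by rewrite !mem_cat orbC map_f ?orbT ?mem_index_iota.
have moments0 i : (mom0 <= i < mom0 + (r.+1 - (k + mom0)))%N ->
    Ihat (q * (1 + 'X) ^+ i) = 0.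
  move=> hi; apply: (dofs0 (inr i)); rewrite !mem_cat map_f ?orbT // mem_index_iota.
  by move: hi; rewrite /mom0; case: (k == 0%N) => /=; lia.
have [psi qpsi] := endpoint_factor left0 right0.
have [psi0|psi_nz] := eqVneq psi 0; first by rewrite qpsi psi0 mulr0.
have w_nz : (1 - 'X) ^+ nright * (1 + 'X) ^+ nleft != 0 :> {poly R}.
  by rewrite -size_poly_eq0 size_weight.
have size_psi : (size psi + (k + mom0) <= r.+1)%N.
  move: sq; rewrite qpsi size_mul // size_weight -nleft_nright addSn /= => sq.
  by rewrite addn1 addnS ltnS addnC.
suff psi0 : psi = 0 by move: psi_nz; rewrite psi0 eqxx.
apply: hA1 => [|phi]; first by rewrite /inP max1k; lia.
rewrite /inP max1k => sphi.
rewrite -[k./2]/nright abs_floor2.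
have -> : (1 - 'X) ^+ nright * (1 + 'X) ^+ (nleft + mom0) * psi * phi =
    q * (1 + 'X) ^+ mom0 * phi by rewrite qpsi exprD; ring.
by apply: (moments_vanish Ihat_lin moments0); lia.
Qed.

End Unisolvence.

Section AffineMap.
Variables (R : realType) (a b : R).
Hypothesis a_lt_b : a < b.
Local Notation h := ((b - a) / 2).
Local Notation T := (Tmap a b).

Lemma h_gt0 : 0 < h.
Proof. by rewrite divr_gt0 // subr_gt0. Qed.

Lemma ba_neq0 : b - a != 0.
Proof. by rewrite subr_eq0 gt_eqF. Qed.

Lemma T_horner x : T.[x] = (a + b) / 2 + h * x.
Proof. by rewrite /Tmap !hornerE. Qed.

Lemma Tinv_horner t : (Tinv a b).[t] = 2 / (b - a) * (t - (a + b) / 2).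
Proof. by rewrite /Tinv !hornerE. Qed.

Lemma T_left : T.[-1] = a.
Proof. by rewrite T_horner; field. Qed.

Lemma T_right : T.[1] = b.
Proof. by rewrite T_horner; field. Qed.

Lemma T_Tinv t : T.[(Tinv a b).[t]] = t.
Proof. by rewrite T_horner Tinv_horner; field; rewrite ba_neq0. Qed.

Lemma Tinv_T : Tinv a b \Po T = 'X.
Proof.
rewrite /Tinv /Tmap comp_polyM comp_polyC comp_polyB comp_polyX comp_polyC.
rewrite addrAC subrr add0r mulrA -polyCM.
have -> : 2 / (b - a) * ((b - a) / 2) = 1 by field; rewrite ba_neq0.
by rewrite mul1r.
Qed.

Lemma Tinv_le1 t : a < t <= b -> `|(Tinv a b).[t]| <= 1.
Proof.
move=> /andP [lt_at le_tb]; rewrite Tinv_horner ler_norml.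
have k_ge0 : 0 <= 2 / (b - a) by rewrite divr_ge0 // subr_ge0 ltW.
apply/andP; split; rewrite -subr_ge0.
- rewrite (_ : _ - _ = 2 / (b - a) * (t - a)); last by field; rewrite ba_neq0.
  by rewrite mulr_ge0 // subr_ge0 ltW.
- rewrite (_ : _ - _ = 2 / (b - a) * (b - t)); last by field; rewrite ba_neq0.
  by rewrite mulr_ge0 // subr_ge0.
Qed.

Lemma size_Tmap : size T = 2.
Proof.
by rewrite /Tmap addrC size_MXaddC polyC_eq0 (gt_eqF h_gt0) size_polyC (gt_eqF h_gt0).
Qed.

Lemma derivn_compT (p : {poly R}) i : (p \Po T)^`(i) = h ^+ i *: (p^`(i) \Po T).
Proof.
elim: i => [|i IH]; first by rewrite !derivn0 expr0 scale1r.
have T' : T^`() = h%:P.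
  by rewrite /Tmap derivD derivC add0r derivM derivC derivX mul0r add0r mulr1.
rewrite derivnS IH derivZ deriv_comp T' [_ * _%:P]mulrC mul_polyC scalerA -exprSr.
by rewrite -derivnS.
Qed.

End AffineMap.

Section Integration.
Variable R : realType.
Local Notation mu := (@lebesgue_measure R).

Lemma integrable_continuous (f : R -> R) (u v : R) : continuous f ->
  mu.-integrable `]u, v] (EFin \o f).
Proof.
move=> cf; apply: (@integrableS _ _ _ mu `[u, v]%classic) => //.
- by apply/subset_itvP; exact: subset_itv_oc_cc.
- apply: continuous_compact_integrable; first exact: segment_compact.
  exact: continuous_subspaceT.
Qed.

Lemma continuous_enorm d (P : 'I_d -> {poly R}) :
  continuous (fun t => enorm (evalv P t)).
Proof.
have -> : (fun t => enorm (evalv P t)) = Num.sqrt \o horner (\sum_(j < d) P j * P j).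
  apply/funext => t; rewrite /= /enorm /evalv horner_sum.
  by congr Num.sqrt; apply: eq_bigr => j _; rewrite hornerM expr2.
move=> t; apply: continuous_comp; first exact: continuous_horner.
exact: sqrt_continuous.
Qed.

Lemma integrable_enorm d (P : 'I_d -> {poly R}) u v :
  mu.-integrable `]u, v] (EFin \o (fun t => enorm (evalv P t))).
Proof. exact/integrable_continuous/continuous_enorm. Qed.

Lemma ftc_poly (p : {poly R}) u v : u < v ->
  \int[mu]_(x in `]u, v]) (p^`()).[x] = p.[v] - p.[u].
Proof.
move=> uv; have cp' := @continuous_horner _ p^`().
rewrite Rintegral_itv_obnd_cbnd; last exact: integrable_continuous.
rewrite /Rintegral (@continuous_FTC2 R (fun x => (p^`()).[x]) (fun x => p.[x])) //.
- exact: continuous_subspaceT.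
- split; first by move=> x _; exact: derivable_horner.
  + by apply: cvg_at_right_filter; exact: continuous_horner.
  + by apply: cvg_at_left_filter; exact: continuous_horner.
- by move=> x _; rewrite -derivE.
Qed.

(* Pairing with the increment w turns this into the
   scalar fundamental theorem of calculus plus Cauchy-Schwarz:
   |w|^2 = int <w, P'> <= |w| int |P'|. *)
Lemma increment_le_integral d (P : 'I_d -> {poly R}) u v : u <= v ->
  enorm (fun j => (P j).[v] - (P j).[u]) <=
  \int[mu]_(x in `]u, v]) enorm (evalv (derivv P 1) x).
Proof.
rewrite le_eqVlt => /orP [/eqP <-|uv].
  rewrite (eq_enorm (v := fun _ => 0)) ?enorm0 => [|j]; last by rewrite subrr.
  by apply: Rintegral_ge0 => x _; exact: enorm_ge0.
set I := Rintegral _ _ _; set w := fun j => (P j).[v] - (P j).[u].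
pose H := \sum_(j < d) w j *: P j.
have H_incr : H.[v] - H.[u] = enorm w ^+ 2.
  rewrite enorm_sq /H !horner_sum -sumrB; apply: eq_bigr => j _.
  by rewrite !hornerZ -mulrBr expr2.
have H'_le x : (H^`()).[x] <= enorm w * enorm (evalv (derivv P 1) x).
  rewrite /H raddf_sum horner_sum (eq_bigr (fun j => w j * evalv (derivv P 1) x j)).
    exact: enorm_CS.
  by move=> j _; rewrite /= derivZ hornerZ /evalv /derivv derivn1.
have scale_I : \int[mu]_(x in `]u, v]) (enorm w * enorm (evalv (derivv P 1) x)) =
    enorm w * I.
  by apply: RintegralZl => //; exact: integrable_enorm.
have : enorm w ^+ 2 <= enorm w * I.
  rewrite -H_incr -ftc_poly // -scale_I.
  apply: le_Rintegral => //.
  - exact/integrable_continuous/continuous_horner.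
  - have /(_ (measurable_itv _)) := integrableZl _ (enorm w) (integrable_enorm (derivv P 1) u v).
    by apply: eq_integrable => //= x _; rewrite EFinM.
have I_ge0 : 0 <= I by apply: Rintegral_ge0 => x _; exact: enorm_ge0.
have := enorm_ge0 w; nra.
Qed.

Lemma sup_itv_le (f : R -> R) a b M : a < b ->
  (forall t, a < t <= b -> f t <= M) -> sup [set f t | t in `]a, b]] <= M.
Proof.
move=> ab fM; apply: ge_sup; first by exists (f b), b => //=; rewrite in_itv /= ab lexx.
by move=> _ [t tab <-]; apply: fM; rewrite /= in_itv in tab.
Qed.

Lemma integral_le_length_sup (f : R -> R) a b M : a < b -> continuous f ->
  (forall t, a < t <= b -> f t <= M) ->
  \int[mu]_(t in `]a, b]) f t <= (b - a) * sup [set f t | t in `]a, b]].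
Proof.
move=> ab cf fM; set S := [set f t | t in `]a, b]].
have supS : has_sup S.
  split; first by exists (f b), b => //=; rewrite in_itv /= ab lexx.
  by exists M => _ [t tab <-]; apply: fM; rewrite /= in_itv in tab.
have -> : (b - a) * sup S = \int[mu]_(t in `]a, b]) sup S.
  rewrite Rintegral_cst //; have := @lebesgue_measure_itv R `]a, b].
  by rewrite /= lte_fin ab => ->; rewrite mulrC.
apply: le_Rintegral => //; first exact: integrable_continuous.
- exact/integrable_continuous/cst_continuous.
- by move=> t tab; apply: sup_upper_bound => //; exists t.
Qed.

Lemma sup_le_endpoint_integral d (P : 'I_d -> {poly R}) a b : a < b ->
  sup [set enorm (evalv P t) | t in `]a, b]] <=
  Num.min (enorm (evalv P a)) (enorm (evalv P b)) +
  \int[mu]_(t in `]a, b]) enorm (evalv (derivv P 1) t).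
Proof.
move=> ab; apply: sup_itv_le => // t /andP [lt_at le_tb].
set I := Rintegral _ _ _.
have incr_a := increment_le_integral P (ltW lt_at).
have incr_b := increment_le_integral P le_tb.
set Ia := Rintegral _ _ _ in incr_a; set Ib := Rintegral _ _ _ in incr_b.
have Ib_ge0 : 0 <= Ib by apply: Rintegral_ge0 => x _; exact: enorm_ge0.
have Ia_ge0 : 0 <= Ia by apply: Rintegral_ge0 => x _; exact: enorm_ge0.
have split_I : I - Ia = Ib.
  apply: Rintegral_itvB; rewrite ?bnd_simp //; last exact: ltW.
  exact: (integrable_enorm (derivv P 1) a b).
have from_a : enorm (evalv P t) <= enorm (evalv P a) +
    enorm (fun j => (P j).[t] - (P j).[a]).
  rewrite (eq_enorm (v := fun j => evalv P a j + ((P j).[t] - (P j).[a]))).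
    exact: enormD.
  by move=> j; rewrite /evalv addrC subrK.
have from_b : enorm (evalv P t) <= enorm (evalv P b) +
    enorm (fun j => (P j).[b] - (P j).[t]).
  rewrite (eq_enorm (v := fun j => evalv P b j + (-1) * ((P j).[b] - (P j).[t]))).
    by apply: le_trans (enormD _ _) _; rewrite enormZ normrN1 mul1r.
  by move=> j; rewrite /evalv mulN1r opprB addrC subrK.
rewrite -lerBlDr le_min; apply/andP; split; lra.
Qed.

End Integration.

Section Pullback.
Variables (R : realType) (Ihat : {poly R} -> R) (r k : nat) (a b : R).
Hypothesis Ihat_lin : linfun Ihat.
Hypothesis a_lt_b : a < b.
Local Notation h := ((b - a) / 2).

Definition pullback d (phi : 'I_d -> {poly R}) : 'I_d -> {poly R} :=
  fun j => (phi j \Po Tmap a b)^`().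

Lemma size_pullback d (phi : 'I_d -> {poly R}) j :
  inP r%:Z (phi j) -> (size (pullback phi j) <= r)%N.
Proof.
move=> phi_r; have : (size (phi j \Po Tmap a b) <= r.+1)%N.
  by rewrite size_comp_poly2 ?size_Tmap //; move: phi_r; rewrite /inP -PoszD lez_nat addn1.
rewrite /pullback; set p := phi j \Po Tmap a b => s_le.
have [->|p_nz] := eqVneq p 0; first by rewrite deriv0 size_poly0.
by rewrite -ltnS (leq_trans (lt_size_deriv p_nz)).
Qed.

Lemma pullbackE d (phi : 'I_d -> {poly R}) j :
  pullback phi j = h *: ((phi j)^`() \Po Tmap a b).
Proof. by rewrite /pullback -derivn1 derivn_compT expr1 derivn1. Qed.

Lemma pullback_deriv_norm d (phi : 'I_d -> {poly R}) t :
  enorm (evalv (derivv phi 1) t) = h^-1 * enorm (evalv (pullback phi) (Tinv a b).[t]).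
Proof.
rewrite -[h^-1]ger0_norm ?invr_ge0 ?ltW ?h_gt0 // -enormZ; apply: eq_enorm => j.
rewrite /evalv pullbackE hornerZ horner_comp T_Tinv // /derivv derivn1 mulKf //.
by rewrite gt_eqF ?h_gt0.
Qed.

Lemma pullback_dofs d (phi : 'I_d -> {poly R}) :
  \sum_(x <- dofs r k) enorm (fun j => dof Ihat x (pullback phi j)) =
  \sum_(1 <= i < (posn (floor2 (k%:Z - 1))).+1) h ^+ i * enorm (evalv (derivv phi i) a) +
  \sum_(1 <= i < (k./2).+1) h ^+ i * enorm (evalv (derivv phi i) b) +
  \sum_((k == 0%N) <= i < (r - k).+1)
     enorm (fun j => locI Ihat a b ((phi j)^`() * (1 + Tinv a b) ^+ i)).
Proof.
have h_ge0 : 0 <= h by rewrite ltW ?h_gt0.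
rewrite /dofs !big_cat /= !big_map addrA; congr (_ + _ + _).
- apply: eq_big_seq => -[|i]; rewrite mem_index_iota // => _ /=.
  rewrite -[h ^+ _]ger0_norm ?exprn_ge0 // -enormZ; apply: eq_enorm => j.
  by rewrite /pullback -derivSn derivn_compT hornerZ horner_comp T_left.
- apply: eq_big_seq => -[|i]; rewrite mem_index_iota // => _ /=.
  rewrite -[h ^+ _]ger0_norm ?exprn_ge0 // -enormZ; apply: eq_enorm => j.
  by rewrite /pullback -derivSn derivn_compT hornerZ horner_comp T_right.
- apply: eq_bigr => i _; apply: eq_enorm => j.
  rewrite /= pullbackE /locI rmorphM rmorphXn rmorphD rmorph1 /= Tinv_T //.
  by rewrite -scalerAl linfunZ.
Qed.

End Pullback.

Theorem mainTheorem4 (R : realType) (Ihat : {poly R} -> R)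
  (Ihat_lin : forall (c : R) (p q : {poly R}), Ihat (c *: p + q) = c * Ihat p + Ihat q)
  (r k : nat) (hkr : (k <= r)%N) (hA1 : A1 Ihat r k) :
  exists kappa : R, 0 < kappa /\
  forall (d : nat) (a b : R), a < b -> b - a <= 1 ->
  forall phi : 'I_d -> {poly R}, (forall j, inP r%:Z (phi j)) ->
    let tau := b - a in
    let intdphi :=
      \int[lebesgue_measure]_(t in `]a, b]) enorm (evalv (derivv phi 1) t) in
    [/\ intdphi <= tau * sup [set enorm (evalv (derivv phi 1) t) | t in `]a, b]],
        tau * sup [set enorm (evalv (derivv phi 1) t) | t in `]a, b]]
          <= kappa *
             (\sum_(1 <= i < (posn (floor2 (k%:Z - 1))).+1)
                 (tau / 2) ^+ i * enorm (evalv (derivv phi i) a)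
              + \sum_(1 <= i < (k./2).+1)
                 (tau / 2) ^+ i * enorm (evalv (derivv phi i) b)
              + \sum_((k == 0%N) <= i < (r - k).+1)
                 enorm (fun j => locI Ihat a b
                          ((phi j)^`() * (1 + Tinv a b) ^+ i)))
      & sup [set enorm (evalv phi t) | t in `]a, b]]
          <= Num.min (enorm (evalv phi a)) (enorm (evalv phi b)) + intdphi].
Proof.
have [C [C_ge0 normC]] := norm_equivalence (fun x _ => dof_lin Ihat_lin x)
  (dofs_unisolvent Ihat_lin hkr hA1).
exists (2 * C + 1); split; first by rewrite ltr_wpDl ?mulr_ge0.
move=> d a b ab _ phi phi_r tau intdphi; rewrite {}/tau {}/intdphi.
set S := \sum_(x <- dofs r k) enorm (fun j => dof Ihat x (pullback a b phi j)).
have S_ge0 : 0 <= S by apply: sumr_ge0 => x _; exact: enorm_ge0.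
have ba_gt0 : 0 < b - a by rewrite subr_gt0.
have bound t : a < t <= b -> enorm (evalv (derivv phi 1) t) <= 2 * C * S / (b - a).
  move=> tab; rewrite (pullback_deriv_norm ab) ler_pdivlMr // mulrC mulrA.
  rewrite (_ : (b - a) * ((b - a) / 2)^-1 = 2); last by field; rewrite gt_eqF.
  rewrite -mulrA ler_pM2l // normC ?Tinv_le1 // => j.
  exact: size_pullback.
split.
- by apply: (integral_le_length_sup ab _ bound); exact: continuous_enorm.
- rewrite -pullback_dofs // -/S.
  apply: le_trans (_ : (b - a) * (2 * C * S / (b - a)) <= _).
    by rewrite ler_wpM2l ?(ltW ba_gt0) //; apply: (sup_itv_le ab); exact: bound.
  by rewrite mulrCA divff ?gt_eqF // mulr1 ler_wpM2r // lerDl.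
- exact: sup_le_endpoint_integral.
Qed.
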